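(* Let $X$ be a topological space possessing an infinite metrizable gauge, let $\kappa$ be a regular cardinal with $\kappa\in\mathrm{MG}(X)$, and let $G\in\mathcal{G}_\kappa$. If $X$ is finally $\kappa$-compact, then $(X,d)$ is complete for every $d\in\mathrm{Met}(X;G)$.
   Context: A linearly ordered Abelian group is an Abelian group with a linear order compatible with addition. For $x,y\in G_{>0}$, $x\asymp y$ iff $y\le nx$ and $x\le my$ for some $n,m\in\mathbb{Z}_{\ge1}$; $\mathrm{Arc}(G)=G_{>0}/\asymp$, ordered by $[x]\preceq[y]$ iff ($nx<y$ for all $n$) or $x\asymp y$; $\mathrm{Arc}(G)^\perp$ is $\mathrm{Arc}(G)$ with a new least element adjoined. For a bottomed linearly ordered set $S$ (least element $\perp_S$, $S^*=S\setminus\{\perp_S\}$), $\chi(S)$ is the least cardinal $\kappa>0$ such that some strictly decreasing family $(s_\alpha)_{\alpha<\kappa}$ in $S^*$ has every $t\in S^*$ bounded below by some $s_\alpha$. A $G$-metric: $d\colon X^2\to G$, $d(x,y)=0\iff x=y$, $d\ge0$, symmetric, triangle inequality; $\mathrm{Met}(X;G)$ is the set of $G$-metrics generating the topology of $X$ via open balls of radii in $G_{>0}$. $\mathrm{MG}(X)$: cardinals $\kappa$ with some $G$, $\chi(\mathrm{Arc}(G)^\perp)=\kappa$, $\mathrm{Met}(X;G)\ne\emptyset$; infinite metrizable gauge: some $\kappa\in\mathrm{MG}(X)$ with $\kappa\ge\omega_0$. $\mathcal{G}_\kappa$: groups with $\chi(\mathrm{Arc}(G)^\perp)=\kappa$.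 A filter $\mathcal F$ is Cauchy for $d$ if for every $\epsilon\in G_{>0}$ some $F\in\mathcal F$ has $d(x,y)<\epsilon$ for all $x,y\in F$; $(X,d)$ is complete if every Cauchy filter converges. $X$ is finally $\kappa$-compact if every open cover has a subcover of cardinality $<\kappa$. *)

From HB Require Import structures.
From mathcomp Require Import all_boot all_order all_algebra.
From mathcomp Require Import boolp classical_sets functions filter topology.

Set Implicit Arguments.
Unset Strict Implicit.
Unset Printing Implicit Defensive.

Import GRing.Theory.
Local Open Scope classical_set_scope.
Local Open Scope ring_scope.

Definition card_le (A B : Type) : Prop := exists f : A -> B, injective f.
Definition card_lt (A B : Type) : Prop := card_le A B /\ ~ card_le B A.

(* Strict well-orders, and cardinals represented as initial ordinals:
   a well-ordered type K such that every proper initial segment has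
   cardinality strictly smaller than K.                                *)
Definition is_wellorder (K : Type) (lt : K -> K -> Prop) : Prop :=
  [/\ (forall x, ~ lt x x),
      (forall x y z, lt x y -> lt y z -> lt x z),
      (forall x y, x = y \/ lt x y \/ lt y x) &
      well_founded lt].

Definition is_cardinal (K : Type) (lt : K -> K -> Prop) : Prop :=
  is_wellorder lt /\ forall k : K, ~ card_le K {j : K | lt j k}.

Definition infinite_card (K : Type) : Prop := card_le nat K.

Definition regular_card (K : Type) (lt : K -> K -> Prop) : Prop :=
  infinite_card K /\
  forall A : set K, card_lt {x : K | A x} K ->
    exists k : K, forall a, A a -> lt a k.

Definition is_loag (G : zmodType) (le : rel G) : Prop :=
  [/\ (forall x, le x x),
      (forall x y, le x y -> le y x -> x = y),
      (forall x y z, le x y -> le y z -> le x z),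
      (forall x y, le x y \/ le y x) &
      (forall x y z, le x y -> le (x + z) (y + z))].

Definition glt (G : zmodType) (le : rel G) (x y : G) : Prop := le x y /\ x <> y.

Definition asymp (G : zmodType) (le : rel G) (x y : G) : Prop :=
  exists n m : nat, le y (x *+ n.+1) /\ le x (y *+ m.+1).

(* the order of Arc(G), on representatives: [x] ⪯ [y] *)
Definition arc_le (G : zmodType) (le : rel G) (x y : G) : Prop :=
  (forall n : nat, glt le (x *+ n.+1) y) \/ asymp le x y.

(* chi(S) for a bottomed linear order S, given by S^* = the set of T's
   elements satisfying P, linearly preordered by sle (the linear order
   of S^* is the quotient by sle /\ its converse).                     *)
Definition sstrict (T : Type) (sle : T -> T -> Prop) (x y : T) : Prop :=
  sle x y /\ ~ sle y x.

Definition coinitial_family (T : Type) (P : T -> Prop) (sle : T -> T -> Prop)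
    (K : Type) (ltK : K -> K -> Prop) : Prop :=
  exists s : K -> T,
    [/\ (forall a, P (s a)),
        (forall a b, ltK a b -> sstrict sle (s b) (s a)) &
        (forall t, P t -> exists a, sle (s a) t)].

Definition chi_is (T : Type) (P : T -> Prop) (sle : T -> T -> Prop)
    (K : Type) (ltK : K -> K -> Prop) : Prop :=
  [/\ inhabited K,
      coinitial_family P sle ltK &
      forall (L : Type) (ltL : L -> L -> Prop),
        is_cardinal ltL -> inhabited L -> card_lt L K ->
        ~ coinitial_family P sle ltL].

(* chi(Arc(G)^perp) = kappa; note (Arc(G)^perp)^* = Arc(G) *)
Definition chi_Arc_is (G : zmodType) (le : rel G)
    (K : Type) (ltK : K -> K -> Prop) : Prop :=
  chi_is (fun x : G => glt le 0 x) (arc_le le) ltK.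

Definition is_Gmetric (X : Type) (G : zmodType) (le : rel G)
    (d : X -> X -> G) : Prop :=
  [/\ (forall x y, d x y = 0 <-> x = y),
      (forall x y, le 0 (d x y)),
      (forall x y, d x y = d y x) &
      (forall x y z, le (d x z) (d x y + d y z))].

Definition gball (X : Type) (G : zmodType) (le : rel G)
    (d : X -> X -> G) (x : X) (e : G) : set X :=
  [set y | glt le (d x y) e].

Definition in_Met (X : topologicalType) (G : zmodType) (le : rel G)
    (d : X -> X -> G) : Prop :=
  is_Gmetric le d /\
  forall U : set X, open U <->
    (forall x, U x -> exists e, glt le 0 e /\ gball le d x e `<=` U).

Definition in_MG (X : topologicalType) (K : Type) (ltK : K -> K -> Prop) : Prop :=
  exists (G : zmodType) (le : rel G),
    [/\ is_loag le, chi_Arc_is le ltK & exists d : X -> X -> G, in_Met le d].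

Definition has_infinite_metrizable_gauge (X : topologicalType) : Prop :=
  exists (L : Type) (ltL : L -> L -> Prop),
    [/\ is_cardinal ltL, infinite_card L & in_MG X ltL].

Definition gcauchy (X : Type) (G : zmodType) (le : rel G)
    (d : X -> X -> G) (F : set_system X) : Prop :=
  forall e : G, glt le 0 e ->
    exists A, F A /\ forall x y, A x -> A y -> glt le (d x y) e.

Definition gcomplete (X : topologicalType) (G : zmodType) (le : rel G)
    (d : X -> X -> G) : Prop :=
  forall F : set_system X, ProperFilter F -> gcauchy le d F ->
    exists x : X, F --> x.

Definition finally_compact (X : topologicalType) (K : Type) : Prop :=
  forall C : set (set X),
    (forall A, C A -> open A) -> \bigcup_(A in C) A = setT ->
    exists D : set (set X),
      [/\ D `<=` C, card_lt {A : set X | D A} K & \bigcup_(A in D) A = setT].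

(* If a proper Cauchy filter F had no limit, every x would have a radius r x > 0
   with B(x, 2 r x) not in F; such radii exist because chi(Arc(G)^perp) > 1 means
   Arc(G) has no least element.  Final kappa-compactness covers X by fewer than
   kappa of the balls B(x, r x), and regularity of kappa together with the
   coinitial family of length kappa in Arc(G) gives an e > 0 below all their
   radii.  A set of F of diameter < e meets some B(x, r x), hence lies in
   B(x, 2 r x), which is then in F. *)

From HB Require Import structures.
From mathcomp Require Import all_boot all_order all_algebra.
From mathcomp Require Import boolp classical_sets functions filter topology.

Set Implicit Arguments.
Unset Strict Implicit.
Unset Printing Implicit Defensive.
Import GRing.Theory.
Local Open Scope classical_set_scope.
Local Open Scope ring_scope.

Lemma proj1_sig_inj (T : Type) (P : T -> Prop) : injective (@proj1_sig T P).
Proof. by move=> [a ha] [b hb] /= eab; apply: eq_exist. Qed.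

Lemma card_le_trans (A B C : Type) : card_le A B -> card_le B C -> card_le A C.
Proof. by move=> [f injf] [g injg]; exists (g \o f); apply: inj_comp. Qed.

Lemma card_le_image (I Y : Type) (f : I -> Y) : card_le {y | exists i, f i = y} I.
Proof.
have /choice[g gK] : forall y : {y | exists i, f i = y}, exists i, f i = proj1_sig y.
  by move=> [y [i fiy]]; exists i.
by exists g => y1 y2 eg; apply: proj1_sig_inj; rewrite -!gK eg.
Qed.

Lemma card_lt_image (I Y K : Type) (f : I -> Y) :
  card_lt I K -> card_lt {y | exists i, f i = y} K.
Proof.
move=> [leIK notKI]; split; first exact: card_le_trans (card_le_image f) leIK.
by move=> Kim; apply: notKI; apply: card_le_trans Kim (card_le_image f).
Qed.

Lemma unit_cardinal : is_cardinal (fun _ _ : unit => False).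
Proof.
split; last by move=> k [f _]; case: (f tt).
split; [by move=> ? [] | by move=> ? ? ? [] | by move=> [] []; left |].
by move=> x; constructor.
Qed.

Lemma infinite_card_not_le_unit (K : Type) : infinite_card K -> ~ card_le K unit.
Proof.
move=> [f injf] [g injg].
by have /injg/injf : g (f 0%N) = g (f 1%N) by case: (g (f 0%N)); case: (g (f 1%N)).
Qed.

Section LinearlyOrderedAbelianGroup.
Variables (G : zmodType) (le : rel G).
Hypothesis HG : is_loag le.

Lemma le_refl x : le x x.
Proof. by case: HG. Qed.

Lemma le_anti x y : le x y -> le y x -> x = y.
Proof. by case: HG => _ anti _ _ _; apply: anti. Qed.

Lemma le_trans x y z : le x y -> le y z -> le x z.
Proof. by case: HG => _ _ trans _ _; apply: trans. Qed.

Lemma le_total x y : le x y \/ le y x.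
Proof. by case: HG. Qed.

Lemma le_addr x y z : le x y -> le (x + z) (y + z).
Proof. by case: HG => _ _ _ _ addr; apply: addr. Qed.

Lemma le_addl x y z : le x y -> le (z + x) (z + y).
Proof. by move=> lexy; rewrite ![z + _]addrC; apply: le_addr. Qed.

Lemma le_muln x y n : le x y -> le (x *+ n) (y *+ n).
Proof.
move=> lexy; elim: n => [|n IH]; first by rewrite !mulr0n; apply: le_refl.
by rewrite !mulrS; apply: le_trans (le_addr _ lexy) (le_addl _ IH).
Qed.

Lemma glt_nle x y : glt le x y -> ~ le y x.
Proof. by move=> [lexy neqxy] leyx; apply: neqxy; apply: le_anti. Qed.

Lemma nglt_le x y : ~ glt le x y -> le y x.
Proof.
move=> notlt; case: (le_total y x) => // lexy.
case: (pselect (x = y)) => [->|neqxy]; first exact: le_refl.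
by exfalso; apply: notlt.
Qed.

Lemma nle_glt x y : ~ le x y -> glt le y x.
Proof.
move=> notle; split; first by apply: nglt_le => -[].
by move=> eyx; apply: notle; rewrite eyx; apply: le_refl.
Qed.

Lemma glt_le_trans x y z : glt le x y -> le y z -> glt le x z.
Proof.
move=> ltxy leyz; apply: nle_glt => lezx.
exact: glt_nle ltxy (le_trans leyz lezx).
Qed.

Lemma le_glt_trans x y z : le x y -> glt le y z -> glt le x z.
Proof.
move=> lexy ltyz; apply: nle_glt => lezx.
exact: glt_nle ltyz (le_trans lezx lexy).
Qed.

Lemma glt_trans x y z : glt le x y -> glt le y z -> glt le x z.
Proof. by move=> ltxy [leyz _]; apply: glt_le_trans ltxy leyz. Qed.

Lemma glt_addr x y z : glt le x y -> glt le (x + z) (y + z).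
Proof. by move=> [lexy neqxy]; split; [apply: le_addr | move/addIr]. Qed.

Lemma glt_addl x y z : glt le x y -> glt le (z + x) (z + y).
Proof. by move=> ltxy; rewrite ![z + _]addrC; apply: glt_addr. Qed.

Lemma sstrict_arc_le_glt u v r :
  sstrict (arc_le le) u v -> arc_le le v r -> glt le u r.
Proof.
move=> [[u_ll_v|[n [m [levu leuv]]]] notvu]; last first.
  by exfalso; apply: notvu; right; exists m, n.
move=> [v_ll_r|[n [m [lerv levr]]]].
  by apply: glt_le_trans (u_ll_v 0%N) _; case: (v_ll_r 0%N); rewrite mulr1n.
apply: nle_glt => leru.
exact: glt_nle (u_ll_v m) (le_trans levr (le_muln m.+1 leru)).
Qed.

Lemma arc_no_least (K : Type) (ltK : K -> K -> Prop) :
  chi_Arc_is le ltK -> ~ card_le K unit ->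
  forall e, glt le 0 e -> exists2 h, glt le 0 h & forall n, glt le (h *+ n.+1) e.
Proof.
move=> [[k0] _ chi_min] notKunit e e_pos; apply: contrapT => no_small.
apply: (chi_min unit (fun _ _ => False) unit_cardinal (inhabits tt)).
  by split=> //; exists (fun _ => k0) => -[] [].
exists (fun _ => e); split=> // t t_pos; exists tt.
have [n not_lt] : exists n, ~ glt le (t *+ n.+1) e.
  by apply: contrapT => all_lt; apply: no_small; exists t => // n;
    apply: contrapT => not_lt; apply: all_lt; exists n.
case: (pselect (exists m, le t (e *+ m.+1))) => [[m letm]|no_m].
  by right; exists m, n; split=> //; apply: nglt_le.
by left=> m; apply: nle_glt => letm; apply: no_m; exists m.
Qed.

Lemma regular_chi_Arc_lower_bound (K : Type) (ltK : K -> K -> Prop)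
    (I : Type) (r : I -> G) :
  regular_card ltK -> chi_Arc_is le ltK -> card_lt I K ->
  (forall i, glt le 0 (r i)) -> exists2 e, glt le 0 e & forall i, glt le e (r i).
Proof.
move=> [_ bounded] [_ [s [s_pos s_decr s_coinit]] _] ltIK r_pos.
have /choice[a s_a_le_r] : forall i, exists a, arc_le le (s a) (r i).
  by move=> i; apply: s_coinit.
have [k k_bound] := bounded _ (card_lt_image a ltIK).
exists (s k) => // i.
by apply: sstrict_arc_le_glt (s_decr _ _ (k_bound _ _)) (s_a_le_r i); exists i.
Qed.

End LinearlyOrderedAbelianGroup.

Section GMetricSpace.
Variables (X : topologicalType) (G : zmodType) (le : rel G) (d : X -> X -> G).
Hypotheses (HG : is_loag le) (Hd : in_Met le d).

Lemma gball_center x r : glt le 0 r -> gball le d x r x.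
Proof. by case: Hd => -[d0 _ _ _] _; rewrite /gball /= (proj2 (d0 x x)). Qed.

Lemma gball_shift x y z r s :
  le (d x y) r -> glt le (d y z) s -> gball le d x (r + s) z.
Proof.
case: Hd => -[_ _ _ triangle] _ xy yz.
apply: (le_glt_trans HG (triangle x y z)).
exact: (glt_le_trans HG (glt_addl HG _ yz) (le_addr HG _ xy)).
Qed.

Lemma gball_open x r : open (gball le d x r).
Proof.
apply/(proj2 Hd) => y xy; exists (r - d x y); split.
  by have := glt_addr HG (- d x y) xy; rewrite subrr.
move=> z yz; have := @gball_shift x y z (d x y) _ (le_refl HG _) yz.
by rewrite addrCA subrr addr0.
Qed.

Lemma not_cvg_gball (F : set_system X) x : Filter F -> ~ F --> x ->
  exists2 e, glt le 0 e & ~ F (gball le d x e).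
Proof.
move=> FF notFx.
have [U [xU notFU]] : exists U, nbhs x U /\ ~ F U.
  by apply: contrapT => all_in; apply: notFx => U xU; apply: contrapT => notFU;
    apply: all_in; exists U.
move: xU; rewrite nbhsE => -[V [oV Vx] VU].
have [e [e_pos eV]] := proj1 (proj2 Hd V) oV x Vx.
by exists e => // Fball; apply: notFU; apply: filterS Fball => y /eV /VU.
Qed.

Lemma finally_compact_gball_cover (K : Type) (r : X -> G) :
  finally_compact X K -> (forall x, glt le 0 (r x)) ->
  exists S : set X, card_lt {x | S x} K /\
    forall y, exists2 x, S x & gball le d x (r x) y.
Proof.
move=> fcX r_pos.
pose C := [set B | exists x, B = gball le d x (r x)].
have C_open A : C A -> open A by move=> [x ->]; apply: gball_open.
have C_cover : \bigcup_(A in C) A = setT.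
  by rewrite predeqE => y; split=> // _; exists (gball le d y (r y));
    [exists y | apply: gball_center].
have [D [DC D_small D_cover]] := fcX C C_open C_cover.
have /choice[c c_ball] : forall B : {B | D B},
    exists x, proj1_sig B = gball le d x (r x).
  by move=> [B DB]; apply: DC.
exists (fun x => exists B, c B = x); split; first exact: (card_lt_image c D_small).
move=> y; have : [set: X] y by [].
rewrite -D_cover => -[B DB By].
by exists (c (exist _ B DB)); [exists (exist _ B DB) | rewrite -c_ball].
Qed.

End GMetricSpace.

Theorem lemma2p61 (X : topologicalType)
  (HX : has_infinite_metrizable_gauge X)
  (K : Type) (ltK : K -> K -> Prop)
  (Hcard : is_cardinal ltK) (Hreg : regular_card ltK) (HMG : in_MG X ltK)
  (G : zmodType) (le : rel G) (HG : is_loag le) (HGk : chi_Arc_is le ltK) :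
  finally_compact X K ->
  forall d : X -> X -> G, in_Met le d -> gcomplete le d.
Proof.
move=> fcX d dMet F PF F_cauchy; apply: contrapT => no_limit.
have /choice[r r_spec] : forall x, exists r,
    glt le 0 r /\ ~ F (gball le d x (r + r)).
  move=> x.
  have [e e_pos notFe] := not_cvg_gball dMet _ (fun Fx => no_limit (ex_intro _ x Fx)).
  have [h h_pos h_small] := arc_no_least HG HGk
    (infinite_card_not_le_unit (proj1 Hreg)) e_pos.
  exists h; split=> // Fh; apply: notFe; apply: filterS Fh => y xy.
  by apply: (glt_trans HG xy); rewrite -mulr2n; apply: h_small.
have r_pos x : glt le 0 (r x) by case: (r_spec x).
have [S [S_small S_cover]] := finally_compact_gball_cover HG dMet fcX r_pos.
have [e e_pos e_lt_r] := regular_chi_Arc_lower_bound HG Hreg HGk S_small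
  (fun x : {x | S x} => r_pos (proj1_sig x)).
have [A [FA A_diam]] := F_cauchy e e_pos.
have [y Ay] := filter_ex FA.
have [x Sx xy] := S_cover y.
apply: (proj2 (r_spec x)); apply: filterS FA => z Az.
exact: (gball_shift HG dMet (proj1 xy)
  (glt_trans HG (A_diam y z Ay Az) (e_lt_r (exist _ x Sx)))).
Qed.
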